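(* For every $d\geq 3$, \[ \mathscr{A}(\otimes_{j=1}^d\mathbb{R}^4)=\frac{1}{\sqrt{4^{d-1}}}<\mathscr{A}(\mathrm{Sym}^d(\mathbb{R}^4)) \qquad\text{and}\qquad \mathscr{A}(\otimes_{j=1}^d\mathbb{R}^8)=\frac{1}{\sqrt{8^{d-1}}}<\mathscr{A}(\mathrm{Sym}^d(\mathbb{R}^8)). \]
   Context: Norms on real $n^d$-tensors: \begin{itemize} \item The Frobenius norm is $\|A\|_F=(\sum a_{i_1\dots i_d}^2)^{1/2}$. \item The spectral norm is $\|A\|_2=\max_{\|x^{(j)}\|=1}\sum a_{i_1\dots i_d}x^{(1)}_{i_1}\cdots x^{(d)}_{i_d}$. \end{itemize} For a linear subspace $V$ (the full tensor space $\otimes_{j=1}^d\mathbb{R}^n$ or the space $\mathrm{Sym}^d(\mathbb{R}^n)$ of symmetric tensors), the best rank-one approximation ratio is $\mathscr{A}(V)=\min_{0\neq A\in V}\|A\|_2/\|A\|_F$. *)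

From Stdlib Require Import Reals List Permutation.
Import ListNotations.
Open Scope R_scope.

(* A real n^d-tensor is represented by its entries A [i_1; ...; i_d],
   indices are lists of naturals of length d with entries < n.
   Only the values on valid indices matter. *)
Definition tensor := list nat -> R.

Fixpoint indices (n d : nat) : list (list nat) :=
  match d with
  | O => [ [] ]
  | S d' => flat_map (fun i => map (cons i) (indices n d')) (seq 0 n)
  end.

Definition lsum (l : list R) : R := fold_right Rplus 0 l.

Definition frob (n d : nat) (A : tensor) : R :=
  sqrt (lsum (map (fun idx => A idx ^ 2) (indices n d))).

(* A family of d vectors in R^n: x j i is the i-th coordinate of x^(j+1). *)
Definition vecs := nat -> nat -> R.

Fixpoint prodx (x : vecs) (j : nat) (idx : list nat) : R :=
  match idx with
  | [] => 1
  | i :: r => x j i * prodx x (S j) r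
  end.

Definition mform (n d : nat) (A : tensor) (x : vecs) : R :=
  lsum (map (fun idx => A idx * prodx x 0 idx) (indices n d)).

Definition unit_vecs (n d : nat) (x : vecs) : Prop :=
  forall j, (j < d)%nat -> sqrt (lsum (map (fun i => x j i ^ 2) (seq 0 n))) = 1.

Definition is_spectral_norm (n d : nat) (A : tensor) (s : R) : Prop :=
  (exists x, unit_vecs n d x /\ mform n d A x = s) /\
  (forall x, unit_vecs n d x -> mform n d A x <= s).

Definition nonzero (n d : nat) (A : tensor) : Prop :=
  exists idx, In idx (indices n d) /\ A idx <> 0.

Definition is_symmetric (n d : nat) (A : tensor) : Prop :=
  forall idx idx', In idx (indices n d) -> Permutation idx idx' -> A idx = A idx'.

Definition full_space (n d : nat) (A : tensor) : Prop := True.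

Definition is_approx_ratio (V : nat -> nat -> tensor -> Prop) (n d : nat) (r : R) : Prop :=
  (exists A s, V n d A /\ nonzero n d A /\ is_spectral_norm n d A s /\ s / frob n d A = r) /\
  (forall A s, V n d A -> nonzero n d A -> is_spectral_norm n d A s -> r <= s / frob n d A).

From Pilot Require Import Defs.
From Stdlib Require Import Reals List Permutation Lra Lia ClassicalEpsilon Classical_Prop.
From mathcomp Require all_boot all_order all_algebra.
From mathcomp Require classical_sets boolp topology normedtype matrix_normedtype derive Rstruct Rstruct_topology.
Import ListNotations.
Open Scope R_scope.

(* Write s = ||A||_2 and F = ||A||_F for a real n^d-tensor A.
   1. Lower bound.  By duality, every fiber A(i_1, ..., i_(d-1), _) has norm
      at most s; summing the n^(d-1) squared fibers gives F^2 <= n^(d-1) s^2,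
      so every ratio is >= 1 / sqrt(n^(d-1)) (sumsq_le_of_bounded); the
      inequality is strict as soon as one fiber is shorter than s.
   2. Attainment on the full space.  A bilinear product on R^n with
      |p q| = |p| |q| (quaternions, octonions) yields the tensor
      T(i_1..i_d) = ((e_0 e_(i_1)) ... e_(i_(d-1)))_(i_d) with ||T||_2 = 1 and
      ||T||_F^2 = n^(d-1) (full_ratio).
   3. Strictness on symmetric tensors (n >= 3, d >= 3).  If all fibers
      A(i, j, 0, ..., 0, _) had norm s, testing A against
      (a e_i + b e_j) (x) (c e_i + d e_j) (x) e_0 ... (x) w would force
      A(i,i,0..,_) + A(j,j,0..,_) = 0 for i <> j in {0, 1, 2}, hence
      A(0,0,0..,_) = 0, a contradiction (sym_sumsq_lt).
   4. Existence.  Spectral norms exist, and the ratio attains its minimum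
      on the symmetric tensors of Frobenius norm 1, by the extreme value
      theorem on compact subsets of R^N (module EVT, via MathComp-Analysis). *)

(* Points of R^N are functions K -> R on a finite list L of keys; lpos gives
   the coordinate index of a key. *)
Fixpoint lpos {K} (dec : forall a b : K, {a = b} + {a <> b}) (a : K) (l : list K) : nat :=
  match l with
  | [] => 0%nat
  | h :: t => if dec a h then 0%nat else S (lpos dec a t)
  end.

Lemma lpos_lt {K} dec (a : K) l : In a l -> (lpos dec a l < length l)%nat.
Proof.
  induction l as [|h t IH]; simpl; intros Ha; [destruct Ha|].
  destruct (dec a h); [lia|]. destruct Ha as [->|Ha]; [contradiction|]. specialize (IH Ha). lia.
Qed.

Lemma nth_error_lpos {K} dec (a : K) l : In a l -> nth_error l (lpos dec a l) = Some a.
Proof.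
  induction l as [|h t IH]; simpl; intros Ha; [destruct Ha|].
  destruct (dec a h) as [->|Hne]; [reflexivity|]. destruct Ha as [->|Ha]; [contradiction|]. auto.
Qed.

Definition close_on {K} (L : list K) (y z : K -> R) (eps : R) : Prop :=
  forall k, In k L -> Rabs (y k - z k) < eps.

(* Extreme value theorem for a continuous function on a closed bounded set of
   points of R^L, transported from MathComp-Analysis's EVT on row vectors. *)
Module EVT.
Import all_boot all_order all_algebra.
Import classical_sets boolp topology normedtype matrix_normedtype derive Rstruct Rstruct_topology.
Import Order.TTheory GRing.Theory Num.Theory.
Local Open Scope classical_set_scope.
Local Open Scope ring_scope.

Lemma near_coordwise (N : nat) (v : 'rV[R]_N) (eps : R) : 0 < eps ->
  \forall w \near v, forall i : 'I_N, `|v ord0 i - (w : 'rV[R]_N) ord0 i| < eps.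
Proof.
move=> eps0.
apply: (@filter_forall _ 'I_N (fun i (w : 'rV[R]_N) => `|v ord0 i - w ord0 i| < eps) (nbhs v) _) => i.
exact: (@cvgr_dist_lt _ R^o _ _ _ _ _ (@coord_continuous _ 1 N ord0 i v) _ eps0).
Qed.

Section KeyedEVT.
Variables (K : Type) (dec : forall a b : K, {a = b} + {a <> b}) (L : list K).
Variables (P : (K -> R) -> Prop) (f : (K -> R) -> R) (B : R).
Hypothesis P_nonempty : exists y, P y.
Hypothesis P_bounded : forall y, P y -> forall k, List.In k L -> Rle (Rabs (y k)) B.
Hypothesis P_closed : forall y,
  (forall eps, Rlt 0 eps -> exists z, P z /\ close_on L y z eps) -> P y.
Hypothesis f_continuous : forall y, P y -> forall eps, Rlt 0 eps ->
  exists delta, Rlt 0 delta /\ forall z, P z -> close_on L y z delta -> Rlt (Rabs (Rminus (f y) (f z))) eps.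

Let N := length L.
Let of_row (v : 'rV[R]_N) : K -> R :=
  fun k => if insub (lpos dec k L) is Some i then v ord0 i else 0.
Let to_row (y : K -> R) : 'rV[R]_N :=
  \row_(i < N) (if List.nth_error L i is Some k then y k else 0).

Lemma of_rowE k : List.In k L -> exists i : 'I_N, forall v, of_row v k = v ord0 i.
Proof.
move=> kL; have /ssrnat.ltP lt_k := lpos_lt dec k L kL.
by exists (Ordinal lt_k) => v; rewrite /of_row insubT.
Qed.

Lemma of_to_row y k : List.In k L -> of_row (to_row y) k = y k.
Proof.
move=> kL; have /ssrnat.ltP lt_k := lpos_lt dec k L kL.
by rewrite /of_row insubT mxE /= (nth_error_lpos dec k L kL).
Qed.

(* Closedness makes P and f depend only on the coordinates in L. *)
Lemma P_agree y y' : (forall k, List.In k L -> y k = y' k) -> P y -> P y'.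
Proof.
move=> yy' Py; apply: P_closed => eps eps0; exists y; split => // k kL.
by rewrite yy' // Rminus_diag Rabs_R0.
Qed.

Lemma f_agree y y' : (forall k, List.In k L -> y k = y' k) -> P y -> f y = f y'.
Proof.
move=> yy' Py; have Py' := P_agree _ _ yy' Py.
case: (Req_dec (f y) (f y')) => // /Rminus_eq_contra/Rabs_pos_lt fyy'.
have [del [del0 Hdel]] := f_continuous _ Py _ fyy'.
have /Rlt_irrefl // := Hdel _ Py' (fun k kL => ltac:(rewrite yy' // Rminus_diag Rabs_R0; exact del0)).
Qed.

Let A := [set v : 'rV[R]_N | P (of_row v)].
Let box := [set v : 'rV[R]_N | forall i, `[-B, B]%classic (v ord0 i)].

Lemma A_closed : closed A.
Proof.
move=> v Av; apply: P_closed => eps /RltP eps0.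
have [w [Aw Hw]] := Av _ (@near_coordwise _ v _ eps0).
exists (of_row w); split => // k /of_rowE [i Ei]; rewrite !Ei.
by apply/RltP; exact: Hw.
Qed.

Lemma f_of_row_continuous : {within box `&` A, continuous (f \o of_row)}.
Proof.
apply/subspace_continuousP => v [_ Av].
apply/(@cvgrPdist_lt _ R^o) => e /RltP e0.
have [del [/RltP del0 Hdel]] := f_continuous _ Av _ e0.
move: (@near_coordwise _ v _ del0); apply: filterS => w Hw [_ Aw].
apply/RltP; apply: Hdel => // k /of_rowE [i Ei]; rewrite !Ei.
by apply/RltP; exact: Hw.
Qed.

Lemma to_row_box y : P y -> box (to_row y).
Proof.
move=> Py i; rewrite mxE.
have [k ik] : exists k, List.nth_error L i = Some k.
  case E: (List.nth_error L i) => [k|]; first by exists k.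
  by move/List.nth_error_None/ssrnat.leP: E; rewrite leqNgt ltn_ord.
rewrite ik /= in_itv /=; have /RleP := P_bounded _ Py _ (List.nth_error_In L i ik).
by rewrite ler_norml => /andP[-> ->].
Qed.

Lemma evt_min_on : exists y, P y /\ forall z, P z -> Rle (f y) (f z).
Proof.
have row_in y : P y -> (box `&` A) (to_row y).
  move=> Py; split; first exact: to_row_box.
  by apply: (P_agree _ _ _ Py) => k kL; rewrite of_to_row.
have cpt : compact (box `&` A).
  apply: (@compact_closedI _ box A _ A_closed).
  by apply: (@rV_compact _ _ (fun=> `[-B, B]%classic)) => _; exact: segment_compact.
have [y0 Py0] := P_nonempty.
have [c /set_mem [_ Ac] cmin] :=
  @EVT_min_rV _ N (f \o of_row) _ (ex_intro _ _ (row_in _ Py0)) cpt f_of_row_continuous.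
exists (of_row c); split => // z Pz.
have /RleP := cmin _ (mem_set (row_in _ Pz)).
by rewrite /= -(f_agree z (of_row (to_row z))) // => k kL; rewrite of_to_row.
Qed.

End KeyedEVT.
End EVT.

Lemma evt_max_on {K} (dec : forall a b : K, {a = b} + {a <> b}) (L : list K)
  (P : (K -> R) -> Prop) (f : (K -> R) -> R) (B : R) :
  (exists y, P y) ->
  (forall y, P y -> forall k, In k L -> Rabs (y k) <= B) ->
  (forall y, (forall eps, 0 < eps -> exists z, P z /\ close_on L y z eps) -> P y) ->
  (forall y, P y -> forall eps, 0 < eps -> exists delta, 0 < delta /\
      forall z, P z -> close_on L y z delta -> Rabs (f y - f z) < eps) ->
  exists y, P y /\ forall z, P z -> f z <= f y.
Proof.
  intros Hne Hb Hcl Hct.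
  destruct (EVT.evt_min_on K dec L P (fun y => - f y) B Hne Hb Hcl) as [y [Py Hy]].
  - intros y Py eps Heps. destruct (Hct y Py eps Heps) as [del [Hdel Hz]].
    exists del. split; [exact Hdel|]. intros z Pz Hyz.
    replace (- f y - - f z) with (- (f y - f z)) by ring. rewrite Rabs_Ropp. auto.
  - exists y. split; [exact Py|]. intros z Pz. specialize (Hy z Pz). lra.
Qed.

Lemma lsum_app l1 l2 : lsum (l1 ++ l2) = lsum l1 + lsum l2.
Proof. induction l1; simpl; [ring| rewrite IHl1; ring]. Qed.

Lemma lsum_plus {A} (f g : A -> R) l :
  lsum (map (fun a => f a + g a) l) = lsum (map f l) + lsum (map g l).
Proof. induction l; simpl; [ring| rewrite IHl; ring]. Qed.

Lemma lsum_scal {A} (c : R) (f : A -> R) l :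
  lsum (map (fun a => c * f a) l) = c * lsum (map f l).
Proof. induction l; simpl; [ring| rewrite IHl; ring]. Qed.

Lemma lsum_minus {A} (f g : A -> R) l :
  lsum (map (fun a => f a - g a) l) = lsum (map f l) - lsum (map g l).
Proof. induction l; simpl; [ring| rewrite IHl; ring]. Qed.

Lemma lsum_ext {A} (f g : A -> R) l :
  (forall a, In a l -> f a = g a) -> lsum (map f l) = lsum (map g l).
Proof. intro H. f_equal. apply map_ext_in. exact H. Qed.

Lemma lsum_const {A} (c : R) (l : list A) :
  lsum (map (fun _ => c) l) = INR (length l) * c.
Proof. induction l; simpl length; [simpl; ring| rewrite S_INR; simpl; rewrite IHl; ring]. Qed.

Lemma lsum_flat_map {A B} (f : B -> R) (g : A -> list B) l :
  lsum (map f (flat_map g l)) = lsum (map (fun a => lsum (map f (g a))) l).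
Proof. induction l; simpl; [reflexivity|]. rewrite map_app, lsum_app, IHl. reflexivity. Qed.

Lemma lsum_swap {A B} (f : A -> B -> R) l1 l2 :
  lsum (map (fun a => lsum (map (fun b => f a b) l2)) l1) =
  lsum (map (fun b => lsum (map (fun a => f a b) l1)) l2).
Proof.
  induction l1; simpl.
  - symmetry. transitivity (lsum (map (fun _ : B => 0) l2)); [apply lsum_ext; reflexivity|].
    rewrite lsum_const. ring.
  - rewrite IHl1, <- lsum_plus. reflexivity.
Qed.

Lemma lsum_le {A} (f g : A -> R) l :
  (forall a, In a l -> f a <= g a) -> lsum (map f l) <= lsum (map g l).
Proof.
  induction l; simpl; intro H; [lra|].
  assert (f a <= g a) by auto.
  assert (lsum (map f l) <= lsum (map g l)) by auto. lra.
Qed.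

Lemma lsum_nonneg {A} (f : A -> R) l :
  (forall a, In a l -> 0 <= f a) -> 0 <= lsum (map f l).
Proof.
  intro H. rewrite <- (Rmult_0_r (INR (length l))), <- lsum_const. apply lsum_le. auto.
Qed.

Lemma lsum_abs {A} (f : A -> R) l :
  Rabs (lsum (map f l)) <= lsum (map (fun a => Rabs (f a)) l).
Proof.
  induction l; simpl; [rewrite Rabs_R0; lra|].
  eapply Rle_trans; [apply Rabs_triang|]. lra.
Qed.

Lemma lsum_lt {A} (f : A -> R) (c : R) l :
  (forall a, In a l -> f a <= c) -> (exists a, In a l /\ f a < c) ->
  lsum (map f l) < INR (length l) * c.
Proof.
  induction l as [|b l IH]; intros H [a [Ha Hlt]]; [destruct Ha|].
  simpl length; rewrite S_INR; simpl.
  assert (f b <= c) by apply H, in_eq.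
  assert (lsum (map f l) <= INR (length l) * c).
  { rewrite <- lsum_const. apply lsum_le. intros; apply H, in_cons; auto. }
  destruct Ha as [<-|Ha]; [lra|].
  assert (lsum (map f l) < INR (length l) * c).
  { apply IH; [intros; apply H, in_cons; auto| eauto]. }
  lra.
Qed.

Lemma term_le_lsum {A} (f : A -> R) l a :
  (forall b, In b l -> 0 <= f b) -> In a l -> f a <= lsum (map f l).
Proof.
  induction l as [|b l IH]; simpl; intros H Ha; [destruct Ha|].
  assert (0 <= f b) by auto.
  assert (0 <= lsum (map f l)) by (apply lsum_nonneg; auto).
  destruct Ha as [<-|Ha]; [lra|].
  assert (f a <= lsum (map f l)) by auto. lra.
Qed.

Lemma lsum_pos_ex {A} (f : A -> R) l :
  0 < lsum (map f l) -> exists a, In a l /\ f a <> 0.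
Proof.
  induction l as [|b l IH]; simpl; intro H; [lra|].
  destruct (Req_dec (f b) 0) as [E|E]; [|eauto].
  destruct IH as [a [Ha Hfa]]; [lra| eauto].
Qed.

(* Vectors of R^n are functions nat -> R, of which only the first n
   coordinates matter. *)

Definition ev (i : nat) : nat -> R := fun p => if Nat.eqb p i then 1 else 0.
Definition normsq (n : nat) (v : nat -> R) : R := lsum (map (fun i => v i ^ 2) (seq 0 n)).
Definition dot (n : nat) (u v : nat -> R) : R := lsum (map (fun i => u i * v i) (seq 0 n)).

Lemma lsum_ev (n i : nat) (g : nat -> R) :
  (i < n)%nat -> lsum (map (fun p => ev i p * g p) (seq 0 n)) = g i.
Proof.
  intro Hi. assert (Hin : In i (seq 0 n)) by (apply in_seq; lia).
  generalize (seq_NoDup n 0). induction (seq 0 n) as [|b l IH]; [destruct Hin|].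
  intro Hnd. inversion Hnd as [|? ? Hb Hl]; subst. simpl. unfold ev at 1.
  destruct Hin as [<-|Hin].
  - rewrite Nat.eqb_refl, (lsum_ext _ (fun _ => 0)), lsum_const; [ring|].
    intros a Ha. unfold ev. destruct (Nat.eqb_spec a b); [subst; contradiction| ring].
  - destruct (Nat.eqb_spec b i); [subst; contradiction|]. rewrite IH by auto. ring.
Qed.

Lemma lsum_ev2 n i j a b (g : nat -> R) : (i < n)%nat -> (j < n)%nat ->
  lsum (map (fun p => (a * ev i p + b * ev j p) * g p) (seq 0 n)) = a * g i + b * g j.
Proof.
  intros Hi Hj.
  rewrite (lsum_ext _ (fun p => a * (ev i p * g p) + b * (ev j p * g p))) by (intros; ring).
  rewrite lsum_plus, !lsum_scal, !lsum_ev by auto. reflexivity.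
Qed.

Lemma normsq_nonneg n v : 0 <= normsq n v.
Proof. apply lsum_nonneg. intros; apply pow2_ge_0. Qed.

Lemma normsq_dot n v : normsq n v = dot n v v.
Proof. apply lsum_ext. intros; ring. Qed.

Lemma dot_ext_l n u u' v : (forall k, (k < n)%nat -> u k = u' k) -> dot n u v = dot n u' v.
Proof. intro H. apply lsum_ext. intros k Hk. apply in_seq in Hk. rewrite H by lia. reflexivity. Qed.

Lemma dot_ev n u i : (i < n)%nat -> dot n u (ev i) = u i.
Proof.
  intro H. unfold dot. rewrite <- (lsum_ev n i u) by exact H. apply lsum_ext. intros; ring.
Qed.

Lemma normsq_ev n i : (i < n)%nat -> normsq n (ev i) = 1.
Proof. intro H. rewrite normsq_dot, dot_ev by exact H. unfold ev. rewrite Nat.eqb_refl. reflexivity. Qed.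

Lemma normsq_ev2 n i j a b : (i < n)%nat -> (j < n)%nat -> i <> j ->
  normsq n (fun p => a * ev i p + b * ev j p) = a ^ 2 + b ^ 2.
Proof.
  intros Hi Hj Hij. rewrite normsq_dot. unfold dot. rewrite lsum_ev2 by auto. unfold ev.
  rewrite !Nat.eqb_refl. apply Nat.eqb_neq in Hij as E1. rewrite E1.
  apply not_eq_sym, Nat.eqb_neq in Hij. rewrite Hij. ring.
Qed.

Lemma dot_le_unit n u w : normsq n u = 1 -> normsq n w = 1 -> dot n u w <= 1.
Proof.
  intros Hu Hw.
  assert (H : 0 <= normsq n (fun i => u i - w i)) by apply normsq_nonneg.
  unfold normsq in H.
  rewrite (lsum_ext _ (fun i => u i ^ 2 + (-2) * (u i * w i) + w i ^ 2)) in H by (intros; ring).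
  rewrite !lsum_plus, lsum_scal in H. unfold normsq, dot in *. lra.
Qed.

Lemma dual_bound n u M : (1 <= n)%nat ->
  (forall w, normsq n w = 1 -> dot n u w <= M) -> normsq n u <= M ^ 2 /\ 0 <= M.
Proof.
  intros Hn H.
  assert (HM : 0 <= M).
  { assert (H1 := H (ev 0) (normsq_ev n 0 ltac:(lia))).
    assert (Hneg : normsq n (fun p => -1 * ev 0 p) = 1).
    { rewrite <- (normsq_ev n 0) by lia. apply lsum_ext. intros; ring. }
    assert (H2 := H _ Hneg). unfold dot in H2.
    rewrite (lsum_ext _ (fun p => -1 * (u p * ev 0 p))), lsum_scal in H2 by (intros; ring).
    fold (dot n u (ev 0)) in H2. rewrite dot_ev in H1, H2 by lia. lra. }
  split; [|exact HM].
  destruct (Rle_lt_or_eq_dec _ _ (normsq_nonneg n u)) as [Hp|E]; [| rewrite <- E; nra].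
  set (r := sqrt (normsq n u)).
  assert (Hr : 0 < r) by (apply sqrt_lt_R0; auto).
  assert (Hrr : r * r = normsq n u) by (apply sqrt_sqrt; lra).
  assert (Hu : dot n u (fun p => / r * u p) = r).
  { unfold dot. rewrite (lsum_ext _ (fun p => / r * u p ^ 2)) by (intros; ring).
    rewrite lsum_scal. fold (normsq n u). rewrite <- Hrr. field. lra. }
  assert (Hw : normsq n (fun p => / r * u p) = 1).
  { unfold normsq. rewrite (lsum_ext _ (fun p => / (r * r) * u p ^ 2)) by (intros; field; lra).
    rewrite lsum_scal. fold (normsq n u). rewrite Hrr. field. lra. }
  specialize (H _ Hw). rewrite Hu in H. rewrite <- Hrr. nra.
Qed.

Definition sumsq (n d : nat) (A : tensor) : R := lsum (map (fun idx => A idx ^ 2) (indices n d)).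

Definition slice (A : tensor) (i : nat) : tensor := fun r => A (i :: r).

Definition fiber (p : list nat) (A : tensor) : nat -> R := fun k => A (p ++ [k]).

Definition shift (x : vecs) : vecs := fun j => x (S j).
Definition cons_vec (v : nat -> R) (x : vecs) : vecs :=
  fun j => match j with O => v | S j' => x j' end.

Lemma frob_sumsq n d A : frob n d A = sqrt (sumsq n d A).
Proof. reflexivity. Qed.

Lemma In_indices n : forall d idx,
  In idx (indices n d) <-> (length idx = d /\ forall a, In a idx -> (a < n)%nat).
Proof.
  induction d as [|d IH]; intro idx; simpl.
  - split.
    + intros [<-|[]]. split; [reflexivity| intros a []].
    + intros [H _]. destruct idx; [auto| discriminate].
  - rewrite in_flat_map. split.
    + intros [i [Hi Hm]]. apply in_map_iff in Hm. destruct Hm as [r [<- Hr]].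
      apply IH in Hr. destruct Hr as [Hl Ha]. apply in_seq in Hi.
      split; [simpl; lia|]. intros a [<-|Ha']; [lia| auto].
    + intros [Hl Ha]. destruct idx as [|i r]; [discriminate|].
      exists i. split; [apply in_seq; specialize (Ha i (or_introl eq_refl)); lia|].
      apply in_map. apply IH. split; [simpl in Hl; lia| intros; apply Ha; simpl; auto].
Qed.

Lemma indices_cons n d i r : (i < n)%nat -> In r (indices n d) -> In (i :: r) (indices n (S d)).
Proof.
  intros Hi Hr. apply In_indices in Hr as [Hl Ha]. apply In_indices.
  split; [simpl; lia| intros a [<-|Ha']; auto].
Qed.

Lemma sumsq_ext n d A A' :
  (forall idx, In idx (indices n d) -> A idx = A' idx) -> sumsq n d A = sumsq n d A'.
Proof. intro H. apply lsum_ext. intros. rewrite H; auto. Qed.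

Lemma mform_ext n d A A' x :
  (forall idx, In idx (indices n d) -> A idx = A' idx) -> mform n d A x = mform n d A' x.
Proof. intro H. apply lsum_ext. intros. rewrite H; auto. Qed.

Lemma nonzero_sumsq_pos n d A : Defs.nonzero n d A -> 0 < sumsq n d A.
Proof.
  intros [idx [Hin Hne]].
  apply Rlt_le_trans with (A idx ^ 2); [rewrite <- Rsqr_pow2; apply Rsqr_pos_lt; exact Hne|].
  apply (term_le_lsum (fun idx => A idx ^ 2)); auto. intros; apply pow2_ge_0.
Qed.

Lemma sumsq_pos_nonzero n d A : 0 < sumsq n d A -> Defs.nonzero n d A.
Proof.
  intro H. apply lsum_pos_ex in H as [idx [Hin Hne]]. exists idx. split; auto.
  intro E. apply Hne. rewrite E. ring.
Qed.

Lemma sumsq_0 n A : sumsq n 0 A = A [] ^ 2.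
Proof. unfold sumsq. simpl. ring. Qed.

Lemma mform_0 n A x : mform n 0 A x = A [].
Proof. unfold mform. simpl. ring. Qed.

Lemma sumsq_S n d A :
  sumsq n (S d) A = lsum (map (fun i => sumsq n d (slice A i)) (seq 0 n)).
Proof.
  unfold sumsq. simpl indices. rewrite lsum_flat_map. apply lsum_ext. intros.
  rewrite map_map. reflexivity.
Qed.

Lemma prodx_shift x r : forall j, prodx x (S j) r = prodx (shift x) j r.
Proof. induction r as [|i r IH]; intro j; simpl; [reflexivity|]. rewrite IH. reflexivity. Qed.

Lemma mform_S n d A x :
  mform n (S d) A x = lsum (map (fun i => x 0%nat i * mform n d (slice A i) (shift x)) (seq 0 n)).
Proof.
  unfold mform. simpl indices. rewrite lsum_flat_map. apply lsum_ext. intros i _.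
  rewrite map_map, <- lsum_scal. apply lsum_ext. intros r _. simpl.
  rewrite prodx_shift. unfold slice. ring.
Qed.

Lemma sumsq_1 n A : sumsq n 1 A = normsq n (fiber [] A).
Proof. rewrite sumsq_S. apply lsum_ext. intros. rewrite sumsq_0. reflexivity. Qed.

Lemma mform_cons_ev2 n d A x i j a b : (i < n)%nat -> (j < n)%nat ->
  mform n (S d) A (cons_vec (fun p => a * ev i p + b * ev j p) x) =
  a * mform n d (slice A i) x + b * mform n d (slice A j) x.
Proof.
  intros Hi Hj. rewrite mform_S. simpl.
  apply (lsum_ev2 n i j a b (fun p => mform n d (slice A p) x)); auto.
Qed.

Lemma mform_cons_ev n d A x i : (i < n)%nat ->
  mform n (S d) A (cons_vec (ev i) x) = mform n d (slice A i) x.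
Proof.
  intro H. rewrite mform_S. simpl. apply (lsum_ev n i (fun p => mform n d (slice A p) x)). auto.
Qed.

Lemma unit_vecs_iff n d x : unit_vecs n d x <-> forall j, (j < d)%nat -> normsq n (x j) = 1.
Proof.
  unfold unit_vecs. split; intros H j Hj; specialize (H j Hj).
  - rewrite <- (sqrt_sqrt (normsq n (x j))) by apply normsq_nonneg. unfold normsq.
    rewrite H. ring.
  - unfold normsq in H. rewrite H. apply sqrt_1.
Qed.

Lemma unit_cons n d v x : normsq n v = 1 -> unit_vecs n d x -> unit_vecs n (S d) (cons_vec v x).
Proof.
  rewrite !unit_vecs_iff. intros Hv Hx [|j] Hj; simpl; [auto| apply Hx; lia].
Qed.

Fixpoint pad (p : list nat) (w : nat -> R) : vecs :=
  match p with
  | [] => fun _ => w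
  | i :: p' => cons_vec (ev i) (pad p' w)
  end.

Lemma pad_unit n w : normsq n w = 1 -> forall p, In p (indices n (length p)) ->
  unit_vecs n (S (length p)) (pad p w).
Proof.
  intros Hw p. induction p as [|i p IH]; intro Hp.
  - apply unit_vecs_iff. intros; exact Hw.
  - apply In_indices in Hp as [_ Ha]. simpl. apply unit_cons.
    + apply normsq_ev, Ha. left; reflexivity.
    + apply IH, In_indices. split; [reflexivity| intros; apply Ha; right; auto].
Qed.

Lemma mform_pad n A w : forall p, In p (indices n (length p)) ->
  mform n (S (length p)) A (pad p w) = dot n (fiber p A) w.
Proof.
  intro p. revert A. induction p as [|i p IH]; intros A Hp.
  - rewrite mform_S. apply lsum_ext. intros. rewrite mform_0. unfold fiber, slice. simpl. ring.
  - apply In_indices in Hp as [_ Ha]. simpl.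
    rewrite mform_cons_ev by (apply Ha; left; reflexivity).
    apply IH. apply In_indices. split; [reflexivity| intros; apply Ha; right; auto].
Qed.

Definition form_bounded (n d : nat) (A : tensor) (M : R) : Prop :=
  forall x, unit_vecs n d x -> mform n d A x <= M.

Lemma slice_bounded n d A M i : (i < n)%nat ->
  form_bounded n (S d) A M -> form_bounded n d (slice A i) M.
Proof.
  intros Hi H x Hx. rewrite <- mform_cons_ev by exact Hi.
  apply H, unit_cons; [apply normsq_ev|]; assumption.
Qed.

Lemma fiber_bound n d A M p : (1 <= n)%nat -> In p (indices n d) ->
  form_bounded n (S d) A M -> normsq n (fiber p A) <= M ^ 2 /\ 0 <= M.
Proof.
  intros Hn Hp H. assert (Hl : length p = d) by (apply In_indices in Hp; apply Hp). subst d.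
  apply dual_bound; [exact Hn|]. intros w Hw.
  rewrite <- mform_pad by exact Hp. apply H, pad_unit; assumption.
Qed.

(* The lower bound ||A||_F^2 <= n^(d-1) M^2: the squared Frobenius norm is the
   sum of the n^(d-1) squared fiber norms. *)
Lemma sumsq_le_of_bounded n (Hn : (1 <= n)%nat) : forall d A M,
  form_bounded n (S d) A M -> sumsq n (S d) A <= INR n ^ d * M ^ 2 /\ 0 <= M.
Proof.
  induction d as [|d IH]; intros A M H.
  - rewrite sumsq_1. simpl pow. rewrite Rmult_1_l. apply (fiber_bound n 0); simpl; auto.
  - assert (Hi : forall i, In i (seq 0 n) -> sumsq n (S d) (slice A i) <= INR n ^ d * M ^ 2 /\ 0 <= M).
    { intros i Hi. apply in_seq in Hi. apply IH, slice_bounded; [lia| exact H]. }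
    split; [|apply (Hi 0%nat), in_seq; lia].
    rewrite sumsq_S.
    replace (INR n ^ S d * M ^ 2) with (INR (length (seq 0 n)) * (INR n ^ d * M ^ 2))
      by (rewrite length_seq; simpl; ring).
    rewrite <- lsum_const. apply lsum_le. intros. apply Hi. assumption.
Qed.

Lemma sumsq_lt_of_short_fiber n (Hn : (1 <= n)%nat) : forall d A M p,
  In p (indices n d) -> form_bounded n (S d) A M -> normsq n (fiber p A) < M ^ 2 ->
  sumsq n (S d) A < INR n ^ d * M ^ 2.
Proof.
  induction d as [|d IH]; intros A M p Hp H Hlt.
  - destruct p; [|apply In_indices in Hp; destruct Hp; discriminate].
    rewrite sumsq_1. simpl. lra.
  - destruct p as [|i p]; [apply In_indices in Hp; destruct Hp; discriminate|].
    apply In_indices in Hp as [Hl Ha].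
    assert (Hi : (i < n)%nat) by (apply Ha; left; reflexivity).
    assert (Hp : In p (indices n d)).
    { apply In_indices. split; [simpl in Hl; lia| intros; apply Ha; right; auto]. }
    rewrite sumsq_S.
    replace (INR n ^ S d * M ^ 2) with (INR (length (seq 0 n)) * (INR n ^ d * M ^ 2))
      by (rewrite length_seq; simpl; ring).
    apply lsum_lt.
    + intros i' Hi'. apply in_seq in Hi'.
      apply sumsq_le_of_bounded, slice_bounded; [assumption| lia| assumption].
    + exists i. split; [apply in_seq; lia|].
      apply (IH _ M p Hp); [apply slice_bounded; assumption| exact Hlt].
Qed.

Lemma inv_sqrt_le_div c S s : 0 < c -> 0 < S -> 0 <= s -> S <= c * s ^ 2 -> / sqrt c <= s / sqrt S.
Proof.
  intros Hc HS Hs H.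
  assert (Hq : sqrt S <= sqrt c * s).
  { rewrite <- (sqrt_pow2 s Hs), <- sqrt_mult_alt by lra. apply sqrt_le_1_alt. exact H. }
  assert (0 < sqrt c) by (apply sqrt_lt_R0; exact Hc).
  assert (0 < sqrt S) by (apply sqrt_lt_R0; exact HS).
  replace (/ sqrt c) with (sqrt S * / (sqrt c * sqrt S)) by (field; lra).
  replace (s / sqrt S) with (sqrt c * s * / (sqrt c * sqrt S)) by (field; lra).
  apply Rmult_le_compat_r; [left; apply Rinv_0_lt_compat; nra| exact Hq].
Qed.

Lemma inv_sqrt_lt_div c S s : 0 < c -> 0 < S -> 0 <= s -> S < c * s ^ 2 -> / sqrt c < s / sqrt S.
Proof.
  intros Hc HS Hs H.
  assert (Hq : sqrt S < sqrt c * s).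
  { rewrite <- (sqrt_pow2 s Hs), <- sqrt_mult_alt by lra. apply sqrt_lt_1_alt. lra. }
  assert (0 < sqrt c) by (apply sqrt_lt_R0; exact Hc).
  assert (0 < sqrt S) by (apply sqrt_lt_R0; exact HS).
  replace (/ sqrt c) with (sqrt S * / (sqrt c * sqrt S)) by (field; lra).
  replace (s / sqrt S) with (sqrt c * s * / (sqrt c * sqrt S)) by (field; lra).
  apply Rmult_lt_compat_r; [apply Rinv_0_lt_compat; nra| exact Hq].
Qed.

Lemma ratio_lower_bound n d A s : (1 <= n)%nat -> Defs.nonzero n (S d) A ->
  is_spectral_norm n (S d) A s -> / sqrt (INR n ^ d) <= s / frob n (S d) A.
Proof.
  intros Hn Hnz [_ Hs]. destruct (sumsq_le_of_bounded n Hn d A s Hs) as [Hle Hs0].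
  apply inv_sqrt_le_div; [apply pow_lt, lt_0_INR; lia| apply nonzero_sumsq_pos| |]; assumption.
Qed.

Lemma dot_comb3 n c1 c2 c3 f g h w :
  dot n (fun k => c1 * f k + c2 * g k + c3 * h k) w = c1 * dot n f w + c2 * dot n g w + c3 * dot n h w.
Proof.
  unfold dot. rewrite (lsum_ext _ (fun k => c1 * (f k * w k) + (c2 * (g k * w k) + c3 * (h k * w k))))
    by (intros; ring).
  rewrite !lsum_plus, !lsum_scal. ring.
Qed.

Lemma normsq_comb3 n c1 c2 c3 f g h :
  normsq n (fun k => c1 * f k + c2 * g k + c3 * h k) =
  c1^2 * dot n f f + c2^2 * dot n g g + c3^2 * dot n h h +
  2*c1*c2 * dot n f g + 2*c2*c3 * dot n g h + 2*c1*c3 * dot n f h.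
Proof.
  unfold normsq, dot.
  rewrite (lsum_ext _ (fun k => c1^2 * (f k * f k) + (c2^2 * (g k * g k) + (c3^2 * (h k * h k) +
     (2*c1*c2 * (f k * g k) + (2*c2*c3 * (g k * h k) + 2*c1*c3 * (f k * h k))))))) by (intros; ring).
  rewrite !lsum_plus, !lsum_scal. ring.
Qed.

Lemma repeat_indices n m : (1 <= n)%nat -> In (repeat 0%nat m) (indices n m).
Proof.
  intro Hn. apply In_indices. split; [apply repeat_length|].
  intros a Ha. apply repeat_spec in Ha. lia.
Qed.

(* Symmetric tensors of order m + 3 on R^n, n >= 3, never attain the lower
   bound: some fiber A(i, j, 0, ..., 0, _) is shorter than the spectral norm. *)
Section SymmetricStrict.
Variables (n m : nat) (A : tensor) (s : R).
Hypothesis Hn : (3 <= n)%nat.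
Hypothesis Hsym : is_symmetric n (S (S (S m))) A.
Hypothesis Hbound : form_bounded n (S (S (S m))) A s.

Let V (i j : nat) : nat -> R := fiber (i :: j :: repeat 0%nat m) A.

Lemma V_indices i j : (i < n)%nat -> (j < n)%nat -> In (i :: j :: repeat 0%nat m) (indices n (S (S m))).
Proof. intros Hi Hj. do 2 (apply indices_cons; [assumption|]). apply repeat_indices. lia. Qed.

Lemma V_sym i j k : (i < n)%nat -> (j < n)%nat -> (k < n)%nat -> V j i k = V i j k.
Proof.
  intros Hi Hj Hk. unfold V, fiber. symmetry. apply Hsym; [|apply perm_swap].
  change ((i :: j :: repeat 0%nat m) ++ [k]) with (i :: j :: (repeat 0%nat m ++ [k])).
  do 2 (apply indices_cons; [assumption|]). apply In_indices.
  rewrite length_app, repeat_length. split; [simpl; lia|].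
  intros a Ha. apply in_app_iff in Ha as [Ha|[<-|[]]]; [apply repeat_spec in Ha; lia| exact Hk].
Qed.

(* Testing A against (a e_i + b e_j) (x) (c e_i + d e_j) (x) e_0 (x) ... (x) w. *)
Lemma test_ineq i j a b c d : (i < n)%nat -> (j < n)%nat -> i <> j ->
  a^2 + b^2 = 1 -> c^2 + d^2 = 1 ->
  normsq n (fun k => (a*c) * V i i k + (a*d + b*c) * V i j k + (b*d) * V j j k) <= s ^ 2.
Proof.
  intros Hi Hj Hij Hab Hcd.
  apply dual_bound; [lia|]. intros w Hw.
  assert (Hpad := pad_unit n w Hw (repeat 0%nat m) ltac:(rewrite repeat_length; apply repeat_indices; lia)).
  rewrite repeat_length in Hpad.
  set (x := cons_vec (fun p => a * ev i p + b * ev j p)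
              (cons_vec (fun p => c * ev i p + d * ev j p) (pad (repeat 0%nat m) w))).
  assert (Hx : unit_vecs n (S (S (S m))) x).
  { apply unit_cons; [rewrite normsq_ev2; auto|].
    apply unit_cons; [rewrite normsq_ev2; auto| exact Hpad]. }
  assert (Hfib : forall p q, mform n (S m) (slice (slice A p) q) (pad (repeat 0%nat m) w) = dot n (V p q) w).
  { intros p q. rewrite <- (repeat_length 0%nat m) at 1. apply mform_pad.
    rewrite repeat_length. apply repeat_indices. lia. }
  specialize (Hbound x Hx). unfold x in Hbound.
  rewrite mform_cons_ev2, !mform_cons_ev2, !Hfib in Hbound by assumption.
  rewrite (dot_ext_l n (V j i) (V i j)) in Hbound by (intros; apply V_sym; assumption).
  rewrite dot_comb3. lra.
Qed.

Lemma pair_cancel i j : (i < n)%nat -> (j < n)%nat -> i <> j ->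
  normsq n (V i i) = s^2 -> normsq n (V i j) = s^2 -> normsq n (V j j) = s^2 ->
  forall k, (k < n)%nat -> V i i k + V j j k = 0.
Proof.
  intros Hi Hj Hij HP HR HQ.
  rewrite normsq_dot in HP, HR, HQ.
  assert (T := fun a b c d => test_ineq i j a b c d Hi Hj Hij).
  assert (T1 := T (3/5) (4/5) 1 0 ltac:(lra) ltac:(lra)).
  assert (T2 := T (3/5) (-(4/5)) 1 0 ltac:(lra) ltac:(lra)).
  assert (T3 := T (3/5) (4/5) 0 1 ltac:(lra) ltac:(lra)).
  assert (T4 := T (3/5) (-(4/5)) 0 1 ltac:(lra) ltac:(lra)).
  assert (T5 := T (3/5) (4/5) (3/5) (4/5) ltac:(lra) ltac:(lra)).
  rewrite normsq_comb3, HP, HR, HQ in T1, T2, T3, T4, T5.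
  assert (Hz : normsq n (fun k => 1 * V i i k + 0 * V i j k + 1 * V j j k) <= 0).
  { rewrite normsq_comb3, HP, HQ. lra. }
  intros k Hk.
  assert (E : (1 * V i i k + 0 * V i j k + 1 * V j j k) ^ 2 <= 0).
  { eapply Rle_trans; [|exact Hz].
    apply (term_le_lsum (fun k => (1 * V i i k + 0 * V i j k + 1 * V j j k) ^ 2));
      [intros; apply pow2_ge_0| apply in_seq; lia]. }
  nra.
Qed.

Lemma some_fiber_short : Defs.nonzero n (S (S (S m))) A ->
  exists i j, (i < n)%nat /\ (j < n)%nat /\ normsq n (V i j) < s ^ 2.
Proof.
  intro Hnz. apply NNPP. intro Hno.
  assert (Vmax : forall i j, (i < n)%nat -> (j < n)%nat -> normsq n (V i j) = s ^ 2).
  { intros i j Hi Hj. apply Rle_antisym.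
    - apply (fiber_bound n (S (S m))); [lia| apply V_indices; assumption| exact Hbound].
    - apply Rnot_lt_le. intro Hlt. apply Hno. exists i, j. auto. }
  assert (Pc : forall i j, (i < n)%nat -> (j < n)%nat -> i <> j ->
                forall k, (k < n)%nat -> V i i k + V j j k = 0).
  { intros i j Hi Hj Hij. apply pair_cancel; try apply Vmax; assumption. }
  assert (Z : normsq n (V 0%nat 0%nat) = 0).
  { unfold normsq. rewrite (lsum_ext _ (fun _ => 0)), lsum_const; [ring|].
    intros k Hk. apply in_seq in Hk.
    assert (V 0%nat 0%nat k + V 1%nat 1%nat k = 0) by (apply Pc; lia).
    assert (V 1%nat 1%nat k + V 2%nat 2%nat k = 0) by (apply Pc; lia).
    assert (V 0%nat 0%nat k + V 2%nat 2%nat k = 0) by (apply Pc; lia).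
    replace (V 0%nat 0%nat k) with 0 by lra. ring. }
  rewrite Vmax in Z by lia.
  destruct (sumsq_le_of_bounded n ltac:(lia) _ _ _ Hbound) as [Hle _].
  assert (Hpos := nonzero_sumsq_pos _ _ _ Hnz). rewrite Z in Hle. lra.
Qed.

Lemma sym_sumsq_lt : Defs.nonzero n (S (S (S m))) A ->
  sumsq n (S (S (S m))) A < INR n ^ S (S m) * s ^ 2.
Proof.
  intro Hnz. destruct (some_fiber_short Hnz) as [i [j [Hi [Hj Hlt]]]].
  apply (sumsq_lt_of_short_fiber n ltac:(lia) _ _ s (i :: j :: repeat 0%nat m));
    [apply V_indices| |]; assumption.
Qed.

End SymmetricStrict.

(* A bilinear multiplication on R^n with |p q| = |p| |q| and e_0 e_0 = e_0
   (a composition algebra: the quaternions for n = 4, the octonions for n = 8).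
   Vectors are functions nat -> R, so the first two fields say that mul only
   reads the first n coordinates of its left argument and is linear in it. *)
Record normed_bilinear (n : nat) (mul : (nat -> R) -> (nat -> R) -> nat -> R) : Prop := {
  nb_ext_l : forall p p' q k, (forall m, (m < n)%nat -> p m = p' m) -> mul p q k = mul p' q k;
  nb_linear_l : forall a b p p' q k,
    mul (fun m => a * p m + b * p' m) q k = a * mul p q k + b * mul p' q k;
  nb_expand_r : forall p c k, lsum (map (fun i => c i * mul p (ev i) k) (seq 0 n)) = mul p c k;
  nb_norm : forall p q, normsq n (mul p q) = normsq n p * normsq n q;
  nb_unit : forall k, (k < n)%nat -> mul (ev 0) (ev 0) k = ev 0 k }.

Fixpoint chain (mul : (nat -> R) -> (nat -> R) -> nat -> R) (p : nat -> R) (x : vecs) (k : nat) : nat -> R :=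
  match k with
  | O => p
  | S k' => chain mul (mul p (x 0%nat)) (shift x) k'
  end.

Fixpoint chain_tensor (mul : (nat -> R) -> (nat -> R) -> nat -> R) (p : nat -> R) (idx : list nat) : R :=
  match idx with
  | [] => 0
  | [i] => p i
  | i :: r => chain_tensor mul (mul p (ev i)) r
  end.

Section NormedBilinear.
Variables (n : nat) (mul : (nat -> R) -> (nat -> R) -> nat -> R).
Hypothesis Hmul : normed_bilinear n mul.

Lemma mul_lsum_l (l : list nat) (c : nat -> R) (q : nat -> nat -> R) y k :
  mul (fun m => lsum (map (fun i => c i * q i m) l)) y k = lsum (map (fun i => c i * mul (q i) y k) l).
Proof.
  induction l as [|a l IH]; simpl.
  - rewrite (nb_ext_l _ _ Hmul _ (fun m => 0 * y m + 0 * y m)) by (intros; ring).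
    rewrite (nb_linear_l _ _ Hmul). ring.
  - rewrite (nb_ext_l _ _ Hmul _ (fun m => c a * q a m + 1 * lsum (map (fun i => c i * q i m) l)))
      by (intros; ring).
    rewrite (nb_linear_l _ _ Hmul), IH. ring.
Qed.

Lemma chain_ext : forall k q q' y, (forall m, (m < n)%nat -> q m = q' m) ->
  forall m, (m < n)%nat -> chain mul q y k m = chain mul q' y k m.
Proof.
  induction k as [|k IH]; intros q q' y Hq m Hm; simpl; [auto|].
  apply IH; auto. intros. apply (nb_ext_l _ _ Hmul). auto.
Qed.

Lemma chain_linear : forall k y w (l : list nat) (c : nat -> R) (q : nat -> nat -> R) (q0 : nat -> R),
  (forall m, (m < n)%nat -> q0 m = lsum (map (fun i => c i * q i m) l)) ->
  lsum (map (fun i => c i * dot n (chain mul (q i) y k) w) l) = dot n (chain mul q0 y k) w.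
Proof.
  induction k as [|k IH]; intros y w l c q q0 Hq; simpl.
  - unfold dot. rewrite (lsum_ext _ (fun i => lsum (map (fun m => c i * q i m * w m) (seq 0 n)))).
    + rewrite lsum_swap. apply lsum_ext. intros m Hm. apply in_seq in Hm.
      rewrite Hq by lia. rewrite <- (Rmult_comm (w m)), <- lsum_scal. apply lsum_ext. intros; ring.
    + intros i _. rewrite <- lsum_scal. apply lsum_ext. intros; ring.
  - apply IH. intros m Hm. rewrite <- mul_lsum_l. apply (nb_ext_l _ _ Hmul). auto.
Qed.

Lemma chain_normsq : forall k p x, (forall j, (j < k)%nat -> normsq n (x j) = 1) ->
  normsq n (chain mul p x k) = normsq n p.
Proof.
  induction k as [|k IH]; intros p x Hx; simpl; [reflexivity|].
  rewrite IH.
  - rewrite (nb_norm _ _ Hmul), Hx by lia. ring.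
  - intros j Hj. apply Hx. lia.
Qed.

Lemma chain_e0 : forall k m, (m < n)%nat -> chain mul (ev 0) (fun _ => ev 0) k m = ev 0 m.
Proof.
  induction k as [|k IH]; intros m Hm; simpl; [reflexivity|].
  rewrite (chain_ext k _ (ev 0)); auto. intros. apply (nb_unit _ _ Hmul). auto.
Qed.

Lemma slice_chain_tensor k p i : forall r, In r (indices n (S k)) ->
  slice (chain_tensor mul p) i r = chain_tensor mul (mul p (ev i)) r.
Proof.
  intros r Hr. apply In_indices in Hr as [Hl _]. destruct r; [discriminate| reflexivity].
Qed.

Lemma chain_tensor_mform : forall k p x,
  mform n (S k) (chain_tensor mul p) x = dot n (chain mul p x k) (x k).
Proof.
  induction k as [|k IH]; intros p x.
  - rewrite mform_S. apply lsum_ext. intros. rewrite mform_0. unfold slice. simpl. ring.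
  - rewrite mform_S.
    rewrite (lsum_ext _ (fun i => x 0%nat i * dot n (chain mul (mul p (ev i)) (shift x) k) (shift x k))).
    + cbn [chain]. apply chain_linear. intros m Hm. symmetry. apply (nb_expand_r _ _ Hmul).
    + intros i _. rewrite <- IH. f_equal. apply mform_ext, slice_chain_tensor.
Qed.

Lemma chain_tensor_sumsq : forall k p, sumsq n (S k) (chain_tensor mul p) = INR n ^ k * normsq n p.
Proof.
  induction k as [|k IH]; intros p.
  - rewrite sumsq_1. simpl pow. rewrite Rmult_1_l. reflexivity.
  - rewrite sumsq_S.
    rewrite (lsum_ext _ (fun _ => INR n ^ k * normsq n p)).
    + rewrite lsum_const, length_seq. simpl. ring.
    + intros i Hi. apply in_seq in Hi.
      rewrite (sumsq_ext _ _ _ _ (slice_chain_tensor k p i)), IH, (nb_norm _ _ Hmul), normsq_ev by lia.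
      ring.
Qed.

Hypothesis Hn : (1 <= n)%nat.

(* The tensor T = chain_tensor mul e_0 has ||T||_2 = 1 (Cauchy-Schwarz and
   multiplicativity of the norm, equality at x = (e_0, ..., e_0))
   and ||T||_F^2 = n^(d-1). *)
Lemma chain_tensor_spectral k : is_spectral_norm n (S k) (chain_tensor mul (ev 0)) 1.
Proof.
  split.
  - exists (fun _ => ev 0). split; [apply unit_vecs_iff; intros; apply normsq_ev; lia|].
    rewrite chain_tensor_mform, (dot_ext_l n _ (ev 0)) by (intros; apply chain_e0; auto).
    rewrite dot_ev by lia. unfold ev. reflexivity.
  - intros x Hx. rewrite unit_vecs_iff in Hx. rewrite chain_tensor_mform. apply dot_le_unit.
    + rewrite chain_normsq; [apply normsq_ev; lia|]. intros; apply Hx; lia.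
    + apply Hx; lia.
Qed.

Lemma full_ratio k : is_approx_ratio full_space n (S k) (/ sqrt (INR n ^ k)).
Proof.
  assert (Hss : sumsq n (S k) (chain_tensor mul (ev 0)) = INR n ^ k).
  { rewrite chain_tensor_sumsq, normsq_ev by lia. ring. }
  assert (Hpow : 0 < INR n ^ k) by (apply pow_lt, lt_0_INR; lia).
  split.
  - exists (chain_tensor mul (ev 0)), 1. split; [exact I|].
    split; [apply sumsq_pos_nonzero; lra|]. split; [apply chain_tensor_spectral|].
    rewrite frob_sumsq, Hss. unfold Rdiv. ring.
  - intros A s _ Hnz Hspec. apply ratio_lower_bound; assumption.
Qed.

End NormedBilinear.

(* Quaternion multiplication in the basis 1, i, j, k. *)
Definition mul4 (p q : nat -> R) (k : nat) : R :=
  match k with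
  | 0%nat =>  p 0%nat * q 0%nat - p 1%nat * q 1%nat - p 2%nat * q 2%nat - p 3%nat * q 3%nat
  | 1%nat =>  p 0%nat * q 1%nat + p 1%nat * q 0%nat + p 2%nat * q 3%nat - p 3%nat * q 2%nat
  | 2%nat =>  p 0%nat * q 2%nat - p 1%nat * q 3%nat + p 2%nat * q 0%nat + p 3%nat * q 1%nat
  | 3%nat =>  p 0%nat * q 3%nat + p 1%nat * q 2%nat - p 2%nat * q 1%nat + p 3%nat * q 0%nat
  | _ => 0
  end.

(* Octonion multiplication; multiplicativity of its norm is the eight-square identity. *)
Definition mul8 (p q : nat -> R) (k : nat) : R :=
  match k with
  | 0%nat =>  p 0%nat * q 0%nat - p 1%nat * q 1%nat - p 2%nat * q 2%nat - p 3%nat * q 3%nat - p 4%nat * q 4%nat - p 5%nat * q 5%nat - p 6%nat * q 6%nat - p 7%nat * q 7%nat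
  | 1%nat =>  p 0%nat * q 1%nat + p 1%nat * q 0%nat + p 2%nat * q 3%nat - p 3%nat * q 2%nat + p 4%nat * q 5%nat - p 5%nat * q 4%nat - p 6%nat * q 7%nat + p 7%nat * q 6%nat
  | 2%nat =>  p 0%nat * q 2%nat - p 1%nat * q 3%nat + p 2%nat * q 0%nat + p 3%nat * q 1%nat + p 4%nat * q 6%nat + p 5%nat * q 7%nat - p 6%nat * q 4%nat - p 7%nat * q 5%nat
  | 3%nat =>  p 0%nat * q 3%nat + p 1%nat * q 2%nat - p 2%nat * q 1%nat + p 3%nat * q 0%nat + p 4%nat * q 7%nat - p 5%nat * q 6%nat + p 6%nat * q 5%nat - p 7%nat * q 4%nat
  | 4%nat =>  p 0%nat * q 4%nat - p 1%nat * q 5%nat - p 2%nat * q 6%nat - p 3%nat * q 7%nat + p 4%nat * q 0%nat + p 5%nat * q 1%nat + p 6%nat * q 2%nat + p 7%nat * q 3%nat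
  | 5%nat =>  p 0%nat * q 5%nat + p 1%nat * q 4%nat - p 2%nat * q 7%nat + p 3%nat * q 6%nat - p 4%nat * q 1%nat + p 5%nat * q 0%nat - p 6%nat * q 3%nat + p 7%nat * q 2%nat
  | 6%nat =>  p 0%nat * q 6%nat + p 1%nat * q 7%nat + p 2%nat * q 4%nat - p 3%nat * q 5%nat - p 4%nat * q 2%nat + p 5%nat * q 3%nat + p 6%nat * q 0%nat - p 7%nat * q 1%nat
  | 7%nat =>  p 0%nat * q 7%nat - p 1%nat * q 6%nat + p 2%nat * q 5%nat + p 3%nat * q 4%nat - p 4%nat * q 3%nat - p 5%nat * q 2%nat + p 6%nat * q 1%nat + p 7%nat * q 0%nat
  | _ => 0
  end.

Lemma quaternions_normed : normed_bilinear 4 mul4.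
Proof.
  split.
  - intros p p' q k Hp. destruct k as [|[|[|[|k]]]]; simpl; rewrite ?Hp by lia; reflexivity.
  - intros a b p p' q k. destruct k as [|[|[|[|k]]]]; simpl; ring.
  - intros p c k. unfold ev. destruct k as [|[|[|[|k]]]]; simpl; ring.
  - intros p q. unfold normsq. simpl. ring.
  - intros k Hk. unfold ev. destruct k as [|[|[|[|k]]]]; simpl; try ring; lia.
Qed.

Lemma octonions_normed : normed_bilinear 8 mul8.
Proof.
  split.
  - intros p p' q k Hp. destruct k as [|[|[|[|[|[|[|[|k]]]]]]]]; simpl; rewrite ?Hp by lia; reflexivity.
  - intros a b p p' q k. destruct k as [|[|[|[|[|[|[|[|k]]]]]]]]; simpl; ring.
  - intros p c k. unfold ev. destruct k as [|[|[|[|[|[|[|[|k]]]]]]]]; simpl; ring.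
  - intros p q. unfold normsq. simpl. ring.
  - intros k Hk. unfold ev. destruct k as [|[|[|[|[|[|[|[|k]]]]]]]]; simpl; try ring; lia.
Qed.


Lemma abs_le_of_approx (y B : R) :
  (forall eps, 0 < eps -> exists z, Rabs z <= B /\ Rabs (y - z) < eps) -> Rabs y <= B.
Proof.
  intro H. apply Rnot_lt_le. intro Hlt.
  destruct (H (Rabs y - B) ltac:(lra)) as [z [Hz Hyz]].
  assert (Rabs y <= Rabs z + Rabs (y - z)).
  { replace y with (z + (y - z)) at 1 by ring. apply Rabs_triang. }
  lra.
Qed.

Lemma eq_0_of_approx (a K : R) : 0 <= K -> (forall eps, 0 < eps -> Rabs a <= K * eps) -> a = 0.
Proof.
  intros HK H. destruct (Req_dec a 0) as [|Ha]; [assumption|]. exfalso.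
  assert (Hp : 0 < Rabs a) by (apply Rabs_pos_lt; auto).
  specialize (H (Rabs a / (2 * (K + 1))) ltac:(apply Rdiv_lt_0_compat; lra)).
  assert (K * (Rabs a / (2 * (K + 1))) < Rabs a).
  { unfold Rdiv. apply (Rmult_lt_reg_r (2 * (K + 1))); [lra|].
    rewrite !Rmult_assoc, Rinv_l by lra. nra. }
  lra.
Qed.

Lemma abs_le_1_of_sq (a : R) : a ^ 2 <= 1 -> Rabs a <= 1.
Proof. intro H. apply Rabs_le. split; nra. Qed.

Lemma lsum_sq_close {A} (u v : A -> R) (l : list A) (eps : R) :
  (forall a, In a l -> Rabs (u a) <= 1 /\ Rabs (v a) <= 1 /\ Rabs (u a - v a) <= eps) ->
  Rabs (lsum (map (fun a => u a ^ 2) l) - lsum (map (fun a => v a ^ 2) l)) <= 2 * INR (length l) * eps.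
Proof.
  intro H. rewrite <- lsum_minus.
  eapply Rle_trans; [apply lsum_abs|].
  replace (2 * INR (length l) * eps) with (INR (length l) * (2 * eps)) by ring.
  rewrite <- lsum_const. apply lsum_le. intros a Ha. destruct (H a Ha) as [H1 [H2 H3]].
  replace (u a ^ 2 - v a ^ 2) with ((u a - v a) * (u a + v a)) by ring.
  rewrite Rabs_mult. assert (Rabs (u a + v a) <= 2) by (eapply Rle_trans; [apply Rabs_triang| lra]).
  assert (0 <= Rabs (u a - v a)) by apply Rabs_pos.
  assert (0 <= Rabs (u a + v a)) by apply Rabs_pos. nra.
Qed.

Lemma unit_coord n d x j i : unit_vecs n d x -> (j < d)%nat -> (i < n)%nat -> Rabs (x j i) <= 1.
Proof.
  intros Hx Hj Hi. rewrite unit_vecs_iff in Hx. apply abs_le_1_of_sq. rewrite <- (Hx j Hj).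
  apply (term_le_lsum (fun i => x j i ^ 2)); [intros; apply pow2_ge_0| apply in_seq; lia].
Qed.

Lemma prodx_bound n d x : (forall j i, (j < d)%nat -> (i < n)%nat -> Rabs (x j i) <= 1) ->
  forall idx j, (j + length idx <= d)%nat -> (forall a, In a idx -> (a < n)%nat) ->
  Rabs (prodx x j idx) <= 1.
Proof.
  intros Hx. induction idx as [|i r IH]; intros j Hj Ha; simpl.
  - rewrite Rabs_R1. lra.
  - rewrite Rabs_mult. simpl in Hj.
    assert (H1 : Rabs (x j i) <= 1) by (apply Hx; [lia| apply Ha; simpl; auto]).
    assert (H2 : Rabs (prodx x (S j) r) <= 1) by (apply IH; [lia| intros; apply Ha; simpl; auto]).
    assert (0 <= Rabs (x j i)) by apply Rabs_pos.
    assert (0 <= Rabs (prodx x (S j) r)) by apply Rabs_pos. nra.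
Qed.

Lemma prodx_close n d x x' delta :
  (forall j i, (j < d)%nat -> (i < n)%nat ->
     Rabs (x j i) <= 1 /\ Rabs (x' j i) <= 1 /\ Rabs (x j i - x' j i) <= delta) ->
  forall idx j, (j + length idx <= d)%nat -> (forall a, In a idx -> (a < n)%nat) ->
  Rabs (prodx x j idx - prodx x' j idx) <= INR (length idx) * delta.
Proof.
  intros Hx. induction idx as [|i r IH]; intros j Hj Ha; cbn [prodx length] in *.
  - replace (1 - 1) with 0 by ring. rewrite Rabs_R0. simpl. lra.
  - destruct (Hx j i ltac:(lia) ltac:(apply Ha; simpl; auto)) as [H1 [H2 H3]].
    assert (H4 : Rabs (prodx x (S j) r) <= 1).
    { apply (prodx_bound n d); [intros; apply Hx; auto| lia| intros; apply Ha; simpl; auto]. }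
    assert (H5 := IH (S j) ltac:(lia) ltac:(intros; apply Ha; simpl; auto)).
    replace (x j i * prodx x (S j) r - x' j i * prodx x' (S j) r)
      with ((x j i - x' j i) * prodx x (S j) r + x' j i * (prodx x (S j) r - prodx x' (S j) r))
      by ring.
    eapply Rle_trans; [apply Rabs_triang|]. rewrite !Rabs_mult, S_INR.
    assert (0 <= Rabs (x j i - x' j i)) by apply Rabs_pos.
    assert (0 <= Rabs (x' j i)) by apply Rabs_pos.
    assert (0 <= Rabs (prodx x (S j) r - prodx x' (S j) r)) by apply Rabs_pos.
    nra.
Qed.

Lemma mform_lipschitz n d A x x' delta :
  (forall j i, (j < d)%nat -> (i < n)%nat ->
     Rabs (x j i) <= 1 /\ Rabs (x' j i) <= 1 /\ Rabs (x j i - x' j i) <= delta) ->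
  Rabs (mform n d A x - mform n d A x') <=
  lsum (map (fun idx => Rabs (A idx)) (indices n d)) * (INR d * delta).
Proof.
  intro Hx. unfold mform. rewrite <- lsum_minus, <- (Rmult_comm (INR d * delta)), <- lsum_scal.
  eapply Rle_trans; [apply lsum_abs|]. apply lsum_le. intros idx Hidx.
  apply In_indices in Hidx as [Hl Ha].
  replace (A idx * prodx x 0 idx - A idx * prodx x' 0 idx)
    with (A idx * (prodx x 0 idx - prodx x' 0 idx)) by ring.
  rewrite Rabs_mult, (Rmult_comm (INR d * delta)). apply Rmult_le_compat_l; [apply Rabs_pos|].
  rewrite <- Hl. apply (prodx_close n d); [exact Hx| simpl; lia| exact Ha].
Qed.

(* Existence of the spectral norm: a family of d vectors of R^n is a point
   of R^(d n) with coordinates indexed by the pairs (j, i). *)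

Definition pair_dec : forall a b : nat * nat, {a = b} + {a <> b}.
Proof. decide equality; apply Nat.eq_dec. Defined.

Definition vec_keys (n d : nat) : list (nat * nat) := list_prod (seq 0 d) (seq 0 n).

Lemma in_vec_keys n d j i : (j < d)%nat -> (i < n)%nat -> In (j, i) (vec_keys n d).
Proof. intros. apply in_prod; apply in_seq; lia. Qed.

Lemma unit_vecs_closed n d (y : nat * nat -> R) :
  (forall eps, 0 < eps ->
     exists z, unit_vecs n d (fun j i => z (j, i)) /\ close_on (vec_keys n d) y z eps) ->
  unit_vecs n d (fun j i => y (j, i)).
Proof.
  intros Hy. apply unit_vecs_iff. intros j Hj.
  assert (Hbox : forall i, (i < n)%nat -> Rabs (y (j, i)) <= 1).
  { intros i Hi. apply abs_le_of_approx. intros eps Heps. destruct (Hy eps Heps) as [z [Hz Hyz]].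
    exists (z (j, i)). split.
    - apply (unit_coord n d (fun j i => z (j, i))); assumption.
    - apply Hyz, in_vec_keys; assumption. }
  apply Rminus_diag_uniq, (eq_0_of_approx _ (2 * INR (length (seq 0 n)))); [apply Rmult_le_pos; [lra| apply pos_INR]|].
  intros eps Heps. destruct (Hy eps Heps) as [z [Hz Hyz]].
  rewrite unit_vecs_iff in Hz. rewrite <- (Hz j Hj). apply lsum_sq_close.
  intros i Hi. apply in_seq in Hi. repeat split.
  - apply Hbox. lia.
  - apply (unit_coord n d (fun j i => z (j, i))); [rewrite unit_vecs_iff; exact Hz| |]; lia.
  - left. apply Hyz, in_vec_keys; lia.
Qed.

Lemma spectral_exists n d A : (1 <= n)%nat -> exists s, is_spectral_norm n d A s.
Proof.
  intro Hn.
  set (P := fun y : nat * nat -> R => unit_vecs n d (fun j i => y (j, i))).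
  destruct (evt_max_on pair_dec (vec_keys n d) P (fun y => mform n d A (fun j i => y (j, i))) 1)
    as [y [Py Hy]].
  - exists (fun ji => ev 0 (snd ji)). apply unit_vecs_iff. intros. apply normsq_ev. lia.
  - intros y Py [j i] Hk. apply in_prod_iff in Hk as [Hj Hi]. apply in_seq in Hj, Hi.
    apply (unit_coord n d (fun j i => y (j, i))); [exact Py| lia| lia].
  - exact (unit_vecs_closed n d).
  - intros y Py eps Heps.
    set (SA := lsum (map (fun idx => Rabs (A idx)) (indices n d))).
    assert (HSA : 0 <= SA) by (apply lsum_nonneg; intros; apply Rabs_pos).
    assert (Hd : 0 <= INR d) by apply pos_INR.
    set (del := eps / (1 + SA * INR d)).
    assert (Hdel : 0 < del) by (apply Rdiv_lt_0_compat; nra).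
    exists del. split; [exact Hdel|]. intros z Pz Hyz.
    eapply Rle_lt_trans; [apply mform_lipschitz with (delta := del)|].
    + intros j i Hj Hi. repeat split.
      * apply (unit_coord n d (fun j i => y (j, i))); assumption.
      * apply (unit_coord n d (fun j i => z (j, i))); assumption.
      * left. apply Hyz, in_vec_keys; assumption.
    + fold SA. rewrite <- Rmult_assoc.
      assert (HD : 0 < 1 + SA * INR d) by nra.
      assert (Hq : SA * INR d * del * (1 + SA * INR d) = eps * (SA * INR d)) by (unfold del; field; lra).
      apply (Rmult_lt_reg_r (1 + SA * INR d)); [exact HD| rewrite Hq; nra].
  - exists (mform n d A (fun j i => y (j, i))). split.
    + exists (fun j i => y (j, i)). split; [exact Py| reflexivity].
    + intros x Hx. apply (Hy (fun ji => x (fst ji) (snd ji))). exact Hx.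
Qed.

Definition sigma (n d : nat) (A : tensor) : R := epsilon (inhabits 0) (is_spectral_norm n d A).

Lemma sigma_spec n d A : (1 <= n)%nat -> is_spectral_norm n d A (sigma n d A).
Proof. intro Hn. unfold sigma. apply epsilon_spec, spectral_exists, Hn. Qed.

Lemma spectral_unique n d A s1 s2 : is_spectral_norm n d A s1 -> is_spectral_norm n d A s2 -> s1 = s2.
Proof.
  intros [[x1 [Hx1 E1]] H1] [[x2 [Hx2 E2]] H2].
  apply Rle_antisym; [rewrite <- E1; auto| rewrite <- E2; auto].
Qed.

Lemma spectral_scale n d A s F : 0 < F -> is_spectral_norm n d A s ->
  is_spectral_norm n d (fun idx => A idx / F) (s / F).
Proof.
  intros HF [[x [Hx E]] Hmax].
  assert (Hm : forall y, mform n d (fun idx => A idx / F) y = mform n d A y / F).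
  { intro y. unfold mform, Rdiv. rewrite Rmult_comm, <- lsum_scal. apply lsum_ext. intros. ring. }
  split.
  - exists x. split; [exact Hx|]. rewrite Hm, E. reflexivity.
  - intros y Hy. rewrite Hm. apply Rmult_le_compat_r; [left; apply Rinv_0_lt_compat, HF| auto].
Qed.

Lemma mform_abs_le n d A x : unit_vecs n d x ->
  Rabs (mform n d A x) <= lsum (map (fun idx => Rabs (A idx)) (indices n d)).
Proof.
  intro Hx. eapply Rle_trans; [apply lsum_abs|]. apply lsum_le. intros idx Hidx.
  apply In_indices in Hidx as [Hl Ha]. rewrite Rabs_mult.
  assert (Rabs (prodx x 0 idx) <= 1).
  { apply (prodx_bound n d); [intros; apply (unit_coord n d); auto| simpl; lia| auto]. }
  assert (0 <= Rabs (A idx)) by apply Rabs_pos. nra.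
Qed.

Lemma spectral_lipschitz n d A B sA sB : is_spectral_norm n d A sA -> is_spectral_norm n d B sB ->
  Rabs (sA - sB) <= lsum (map (fun idx => Rabs (A idx - B idx)) (indices n d)).
Proof.
  intros [[xA [HxA EA]] HA] [[xB [HxB EB]] HB].
  assert (Hdiff : forall x, mform n d A x - mform n d B x = mform n d (fun idx => A idx - B idx) x).
  { intro x. unfold mform. rewrite <- lsum_minus. apply lsum_ext. intros. ring. }
  assert (D1 := mform_abs_le n d (fun idx => A idx - B idx) xA HxA).
  assert (D2 := mform_abs_le n d (fun idx => A idx - B idx) xB HxB).
  rewrite <- Hdiff in D1, D2.
  assert (HB' := HB xA HxA). assert (HA' := HA xB HxB).
  assert (a1 := Rle_abs (mform n d A xA - mform n d B xA)).
  assert (a2 := Rle_abs (- (mform n d A xB - mform n d B xB))). rewrite Rabs_Ropp in a2.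
  apply Rabs_le. split; lra.
Qed.

(* The minimum of ||A||_2 / ||A||_F over nonzero symmetric tensors is
   attained: minimize the continuous function sigma on the compact set of
   symmetric tensors of Frobenius norm 1. *)

Definition list_dec : forall a b : list nat, {a = b} + {a <> b} := list_eq_dec Nat.eq_dec.

Lemma perm_indices n d idx idx' : In idx (indices n d) -> Permutation idx idx' -> In idx' (indices n d).
Proof.
  intros H Hp. apply In_indices in H as [Hl Ha]. apply In_indices. split.
  - rewrite <- (Permutation_length Hp). exact Hl.
  - intros a Ha'. apply Ha. apply Permutation_in with idx'; [apply Permutation_sym|]; assumption.
Qed.

Section SymmetricMinimum.
Variables (n d : nat).
Hypothesis Hn : (1 <= n)%nat.

Let sphere (A : tensor) : Prop := is_symmetric n d A /\ sumsq n d A = 1.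

Lemma sphere_coord A idx : sumsq n d A = 1 -> In idx (indices n d) -> Rabs (A idx) <= 1.
Proof.
  intros HA Hidx. apply abs_le_1_of_sq. rewrite <- HA.
  apply (term_le_lsum (fun idx => A idx ^ 2)); [intros; apply pow2_ge_0| exact Hidx].
Qed.

Lemma sphere_nonempty : exists A, sphere A.
Proof.
  set (N := INR (length (indices n d))).
  assert (HN : 1 <= N).
  { assert (Hin := repeat_indices n d Hn). unfold N.
    destruct (indices n d) as [|a l]; [destruct Hin|].
    simpl length. rewrite S_INR. pose proof (pos_INR (length l)). lra. }
  assert (Hs : 1 <= sqrt N) by (rewrite <- sqrt_1; apply sqrt_le_1_alt; lra).
  exists (fun _ => / sqrt N). split.
  - intros idx idx' _ _. reflexivity.
  - unfold sumsq. rewrite lsum_const. fold N.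
    rewrite pow_inv, <- Rsqr_pow2, Rsqr_sqrt by lra. field. lra.
Qed.

Lemma sphere_closed A :
  (forall eps, 0 < eps -> exists B, sphere B /\ close_on (indices n d) A B eps) -> sphere A.
Proof.
  intro HA. split.
  - intros idx idx' Hidx Hp. assert (Hidx' := perm_indices n d idx idx' Hidx Hp).
    apply Rminus_diag_uniq, (eq_0_of_approx _ 2); [lra|]. intros eps Heps.
    destruct (HA eps Heps) as [B [[HB _] HAB]].
    replace (A idx - A idx') with ((A idx - B idx) - (A idx' - B idx')) by (rewrite (HB idx idx'); auto; ring).
    eapply Rle_trans; [apply Rabs_triang|]. rewrite Rabs_Ropp.
    assert (H1 := HAB idx Hidx). assert (H2 := HAB idx' Hidx'). lra.
  - apply Rminus_diag_uniq, (eq_0_of_approx _ (2 * INR (length (indices n d))));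
      [apply Rmult_le_pos; [lra| apply pos_INR]|].
    intros eps Heps. destruct (HA eps Heps) as [B [[_ HB] HAB]].
    rewrite <- HB. apply lsum_sq_close. intros idx Hidx. repeat split.
    + apply abs_le_of_approx. intros e He. destruct (HA e He) as [B' [[_ HB'] HAB']].
      exists (B' idx). split; [apply sphere_coord|]; auto.
    + apply sphere_coord; assumption.
    + left. apply HAB, Hidx.
Qed.

Lemma sigma_continuous A eps : 0 < eps -> exists delta, 0 < delta /\
  forall B, close_on (indices n d) A B delta -> Rabs (sigma n d A - sigma n d B) < eps.
Proof.
  intro Heps. set (N := INR (length (indices n d))).
  assert (HN : 0 <= N) by apply pos_INR.
  exists (eps / (N + 1)). split; [apply Rdiv_lt_0_compat; lra|]. intros B HAB.
  eapply Rle_lt_trans; [apply spectral_lipschitz; apply sigma_spec, Hn|].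
  apply Rle_lt_trans with (lsum (map (fun _ => eps / (N + 1)) (indices n d))).
  - apply lsum_le. intros idx Hidx. left. apply HAB, Hidx.
  - rewrite lsum_const. fold N. apply (Rmult_lt_reg_r (N + 1)); [lra|].
    replace (N * (eps / (N + 1)) * (N + 1)) with (N * eps) by (field; lra). nra.
Qed.

Lemma normalize_sphere A : is_symmetric n d A -> Defs.nonzero n d A ->
  sphere (fun idx => A idx / frob n d A).
Proof.
  intros HA Hnz. assert (Hpos := nonzero_sumsq_pos _ _ _ Hnz).
  set (F := frob n d A).
  assert (HF : 0 < F) by (apply sqrt_lt_R0, Hpos).
  assert (HFF : F * F = sumsq n d A) by (apply sqrt_sqrt; lra).
  split.
  - intros idx idx' Hidx Hp. rewrite (HA idx idx' Hidx Hp). reflexivity.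
  - unfold sumsq at 1. rewrite (lsum_ext _ (fun idx => / (F * F) * A idx ^ 2)) by (intros; field; lra).
    rewrite lsum_scal. fold (sumsq n d A). rewrite HFF. field. lra.
Qed.

Lemma sym_ratio_exists : exists r, is_approx_ratio is_symmetric n d r.
Proof.
  destruct (EVT.evt_min_on _ list_dec (indices n d) sphere (sigma n d) 1) as [A0 [[Hsym0 Hss0] Hmin]].
  - exact sphere_nonempty.
  - intros A [_ HA] idx Hidx. apply sphere_coord; assumption.
  - exact sphere_closed.
  - intros A _ eps Heps. destruct (sigma_continuous A eps Heps) as [del [Hdel H]].
    exists del. split; [exact Hdel|]. intros B _ HAB. apply H, HAB.
  - exists (sigma n d A0). split.
    + exists A0, (sigma n d A0). split; [exact Hsym0|].
      split; [apply sumsq_pos_nonzero; lra|]. split; [apply sigma_spec, Hn|].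
      rewrite frob_sumsq, Hss0, sqrt_1. field.
    + intros A s HA Hnz Hs.
      assert (HF : 0 < frob n d A) by (apply sqrt_lt_R0, nonzero_sumsq_pos, Hnz).
      rewrite (spectral_unique n d _ _ _ (spectral_scale n d A s _ HF Hs) (sigma_spec _ _ _ Hn)).
      apply Hmin, normalize_sphere; assumption.
Qed.

End SymmetricMinimum.

Lemma ratios_of_normed_bilinear n mul : normed_bilinear n mul -> (3 <= n)%nat -> forall m,
  is_approx_ratio full_space n (S (S (S m))) (/ sqrt (INR n ^ S (S m))) /\
  exists r, is_approx_ratio is_symmetric n (S (S (S m))) r /\ / sqrt (INR n ^ S (S m)) < r.
Proof.
  intros Hmul Hn m. split; [apply (full_ratio n mul Hmul); lia|].
  destruct (sym_ratio_exists n (S (S (S m)))) as [r Hr]; [lia|].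
  exists r. split; [exact Hr|].
  destruct Hr as [[A [s [Hsym [Hnz [Hspec <-]]]]] _].
  destruct (sumsq_le_of_bounded n ltac:(lia) _ _ _ (proj2 Hspec)) as [_ Hs0].
  rewrite frob_sumsq. apply inv_sqrt_lt_div.
  - apply pow_lt, lt_0_INR. lia.
  - apply nonzero_sumsq_pos, Hnz.
  - exact Hs0.
  - apply sym_sumsq_lt; [lia| exact Hsym| exact (proj2 Hspec)| exact Hnz].
Qed.

Theorem corollary1p7 (d : nat) (hd : (3 <= d)%nat) :
  (is_approx_ratio full_space 4 d (/ sqrt (4 ^ (d - 1))) /\
   exists r, is_approx_ratio is_symmetric 4 d r /\ / sqrt (4 ^ (d - 1)) < r) /\
  (is_approx_ratio full_space 8 d (/ sqrt (8 ^ (d - 1))) /\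
   exists r, is_approx_ratio is_symmetric 8 d r /\ / sqrt (8 ^ (d - 1)) < r).
Proof.
  destruct d as [|[|[|m]]]; try lia.
  replace (S (S (S m)) - 1)%nat with (S (S m)) by lia.
  replace 4 with (INR 4) by (simpl; ring).
  replace 8 with (INR 8) by (simpl; ring).
  split.
  - apply (ratios_of_normed_bilinear 4 mul4 quaternions_normed). lia.
  - apply (ratios_of_normed_bilinear 8 mul8 octonions_normed). lia.
Qed.
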